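(* Under assumption (A1) with all $r_k>0$, in the steady state of Algorithm JPS-PF (i.e., when $\mathbf T(n-1)=\mathbf T^*$ with $T_k^*=\kappa r_k$ for all $k$), the probability that any given user $k\in\{1,\dots,K\}$ is selected as the destination in a slot equals $1/K$.
   Context: Model: one controller, $K$ users, time slotted, one user served per slot, saturated traffic. Assumption (A1): $X_1,\dots,X_K$ are i.i.d. nonnegative random variables with unit mean; $r_1,\dots,r_K\ge 0$ are constants; $R_k=r_kX_k$; the rates $\{R_k(n)\}$ are independent over users and slots, with $R_k(n)$ distributed as $R_k$. Probing one user's rate in slot $n$ uses a fraction $\beta\in(0,1]$ of the slot; if $J(n)$ users are probed and user $k$ is scheduled it receives $B_k(n)=(1-J(n)\beta)R_k(n)$, others receive $0$; $T_k(n)=\frac{n-1}{n}T_k(n-1)+\frac1nB_k(n)$; $J_{\max}=\min(K,\lfloor1/\beta\rfloor)$. Algorithm JPS-PF: initialize $T_k(0)=1$. In slot $n$, order users by decreasing $r_k/T_k(n-1)$ as $k_1,\dots,k_K$ and probe in this order; after $j\ge1$ probes let $w_j=\max_{i\le j}R_{k_i}(n)/T_{k_i}(n-1)$; stop at the first $j\ge1$ with $j=J_{\max}$ or $(1-j\beta)w_j\ge(1-(j+1)\beta)\mathbb{E}[\max(w_j,R_{k_{j+1}}/T_{k_{j+1}}(n-1))\mid w_j]$, then transmit to the probed user attaining $w_j$. $\mathbf T^*$ denotes the almost-sure limit of $\mathbf T(n)$ under this algorithm and $\kappa$ the common ratio $T_k^*/r_k$.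
   Formalization: The probing order is drawn uniformly from the orderings by decreasing $r_k/T_k$, independently of $X_1,\dots,X_K$, and among probed users attaining $w_j$ the first probed one is scheduled. Apart from conventions, each condition added here is assumed in the paper as well or is needed for the statement above to hold. *)

From HB Require Import structures.
From mathcomp Require Import all_boot all_order all_algebra all_fingroup.
From mathcomp Require Import all_classical all_reals all_analysis.
Set Implicit Arguments. Unset Strict Implicit. Unset Printing Implicit Defensive.
Import Order.TTheory GRing.Theory Num.Theory.
Local Open Scope classical_set_scope.
Local Open Scope ring_scope.

Definition Jmax (R : realType) (K : nat) (beta : R) : nat :=
  minn K (Num.truncn (beta^-1)).

(* probing order k_1, ..., k_K induced by a permutation s (k_{i+1} = s i) *)
Definition probe_order (K : nat) (s : {perm 'I_K}) : seq 'I_K :=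
  [seq s i | i <- enum 'I_K].

Definition order_ok (R : realType) (K : nat) (r T : 'I_K -> R) (s : {perm 'I_K}) : Prop :=
  forall i j : 'I_K, (i <= j)%N -> r (s j) / T (s j) <= r (s i) / T (s i).

(* w_j = max of the first j probed values v (values are nonnegative) *)
Definition wmax (R : realType) (K : nat) (v : 'I_K -> R) (ks : seq 'I_K) (j : nat) : R :=
  \big[Num.max/0]_(u <- take j ks) v u.

(* stopping test after j probes; h u w = E[max(w, R_u/T_u) | w_j = w] for the
   next user u = k_{j+1} *)
Definition stop_rule (R : realType) (K : nat) (beta : R) (jm : nat)
  (v : 'I_K -> R) (h : 'I_K -> R -> \bar R) (ks : seq 'I_K) (j : nat) : bool :=
  (j == jm) ||
  (if ohead (drop j ks) is Some u then
     (((1 - j%:R * beta) * wmax v ks j)%:E >=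
        (1 - j.+1%:R * beta)%:E * h u (wmax v ks j))%E
   else true).

Definition num_probes (R : realType) (K : nat) (beta : R) (jm : nat)
  (v : 'I_K -> R) (h : 'I_K -> R -> \bar R) (ks : seq 'I_K) : nat :=
  (find (stop_rule beta jm v h ks) (iota 1 jm)).+1.

Definition selected (R : realType) (K : nat) (beta : R) (jm : nat)
  (v : 'I_K -> R) (h : 'I_K -> R -> \bar R) (ks : seq 'I_K) : option 'I_K :=
  let J := num_probes beta jm v h ks in
  ohead [seq u <- take J ks | v u == wmax v ks J].

(* Rates R_k = r_k X_k; the conditional expectation
   E[max(w_j, R_{k_{j+1}}/T_{k_{j+1}}) | w_j] equals h(w_j) with
   h(w) = E[max(w, R_{k_{j+1}}/T_{k_{j+1}})], by independence of users. *)
Definition jps_select d (Om : measurableType d) (R : realType)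
  (P : probability Om R) (K : nat) (X : 'I_K -> Om -> R) (r T : 'I_K -> R)
  (beta : R) (s : {perm 'I_K}) (w : Om) : option 'I_K :=
  selected beta (Jmax K beta)
    (fun u => r u * X u w / T u)
    (fun u x => ('E_P[fun w' => (Num.max x (r u * X u w' / T u))%R])%E)
    (probe_order s).

Definition mutually_independent d (Om : measurableType d) (R : realType)
  (P : probability Om R) (K : nat) (X : 'I_K -> Om -> R)
  (sigma : Om -> {perm 'I_K}) : Prop :=
  forall (A : 'I_K -> set R) (S : set {perm 'I_K}),
    (forall i, measurable (A i)) ->
    P ((sigma @^-1` S) `&` \bigcap_(i in [set: 'I_K]) (X i @^-1` A i)) =
    (P (sigma @^-1` S) * \prod_(i < K) P (X i @^-1` A i))%E.

Definition identically_distributed d (Om : measurableType d) (R : realType)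
  (P : probability Om R) (K : nat) (X : 'I_K -> Om -> R) : Prop :=
  forall (i j : 'I_K) (A : set R), measurable A ->
    P (X i @^-1` A) = P (X j @^-1` A).

From HB Require Import structures.
From mathcomp Require Import all_boot all_order all_algebra all_fingroup.
From mathcomp Require Import all_classical all_reals all_analysis.
From mathcomp Require Import ring measurable_realfun.
Import Order.TTheory GRing.Theory Num.Theory.
Set Implicit Arguments. Unset Strict Implicit. Unset Printing Implicit Defensive.
Local Open Scope classical_set_scope.
Local Open Scope ring_scope.

(* In the steady state every ratio r_k / T_k equals 1 / kappa, so every
   ordering is admissible and the probing order is uniform over all
   permutations, independently of the i.i.d. rates.  Relabelling the users by a
   permutation p therefore leaves the joint law of (probing order, normalized
   rates) invariant, while it relabels the scheduled user by p.  Hence all users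
   are scheduled with the same probability, and since some user is always
   scheduled these K probabilities add up to 1. *)

Section selected_relabel.
Variables (R : realType) (K : nat) (beta : R) (jm : nat) (f : 'I_K -> 'I_K).
Variables (v v' : 'I_K -> R) (h h' : 'I_K -> R -> \bar R).
Hypotheses (ev : forall u, v' (f u) = v u) (eh : forall u, h' (f u) = h u).

Lemma wmax_map ks j : wmax v' (map f ks) j = wmax v ks j.
Proof. by rewrite /wmax -map_take big_map; apply: eq_bigr => u _; exact: ev. Qed.

Lemma stop_rule_map ks j :
  stop_rule beta jm v' h' (map f ks) j = stop_rule beta jm v h ks j.
Proof. by rewrite /stop_rule wmax_map -map_drop; case: (drop j ks) => //= u _; rewrite eh. Qed.

Lemma num_probes_map ks : num_probes beta jm v' h' (map f ks) = num_probes beta jm v h ks.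
Proof. by congr _.+1; apply: eq_find => j; exact: stop_rule_map. Qed.

Lemma selected_map ks :
  selected beta jm v' h' (map f ks) = omap f (selected beta jm v h ks).
Proof.
rewrite /selected num_probes_map wmax_map -map_take filter_map.
rewrite (eq_filter (a2 := fun u => v u == wmax v ks (num_probes beta jm v h ks))).
  by case: [seq _ <- _ | _].
by move=> u /=; rewrite ev.
Qed.

End selected_relabel.

Lemma bigmax_seq_attained (R : realType) (I : eqType) (v : I -> R) (l : seq I) :
  (forall u, 0 <= v u) -> l != [::] ->
  exists2 u, u \in l & v u = \big[Num.max/0]_(u <- l) v u.
Proof.
move=> v0; elim: l => // a l IH _; rewrite big_cons.
case: l IH => [_|b l IH]; first by exists a; rewrite ?mem_head // big_nil max_l.
have [u ul <-] := IH isT.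
have [le_ua|lt_au] := leP (v u) (v a); first by exists a; rewrite ?mem_head // max_l.
by exists u; rewrite ?max_r ?ltW // in_cons ul orbT.
Qed.

Lemma selected_neq_None (R : realType) (K : nat) (beta : R) jm (v : 'I_K -> R) h ks :
  (forall u, 0 <= v u) -> ks != [::] -> selected beta jm v h ks != None.
Proof.
move=> v0 ks0; rewrite /selected; set J := num_probes _ _ _ _ _.
have tk : take J ks != [::] by case: (ks) ks0.
have [u ul eu] := bigmax_seq_attained v0 tk.
have : has (fun u => v u == wmax v ks J) (take J ks) by apply/hasP; exists u; rewrite ?eu.
by rewrite has_filter; case: [seq _ <- _ | _].
Qed.

Section measurable_seq.
Context d (T : measurableType d).

Lemma measurable_has (A : Type) (l : seq A) (q : T -> A -> bool) :
  (forall a, measurable_fun setT (q^~ a)) -> measurable_fun setT (fun z => has (q z) l).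
Proof. by move=> mq; elim: l => [|a l IH] //=; exact: measurable_or. Qed.

Lemma measurable_find_eq (A : Type) (l : seq A) (q : T -> A -> bool) n :
  (forall a, measurable_fun setT (q^~ a)) ->
  measurable_fun setT (fun z => find (q z) l == n).
Proof.
move=> mq; elim: l n => [|a l IH] n //=.
rewrite (_ : (fun z => _) = fun z => (q z a && (n == 0)) ||
   (~~ q z a && ((0 < n)%N && (find (q z) l == n.-1)))); last first.
  by apply: funext => z; case: (q z a); case: n.
apply: measurable_or; apply: measurable_and => //; first exact: measurable_neg.
exact: measurable_and.
Qed.

Lemma measurable_ohead_filter_eq (A : eqType) (l : seq A) (q : T -> A -> bool) a0 :
  (forall a, measurable_fun setT (q^~ a)) ->
  measurable_fun setT (fun z => ohead [seq a <- l | q z a] == Some a0).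
Proof.
move=> mq; elim: l => [|a l IH] //=.
rewrite (_ : (fun z => _) = fun z => (q z a && (a == a0)) ||
   (~~ q z a && (ohead [seq u <- l | q z u] == Some a0))); last first.
  by apply: funext => z; case: (q z a); rewrite /= ?orbF.
apply: measurable_or; apply: measurable_and => //; exact: measurable_neg.
Qed.

Lemma measurable_bigmaxr (R : realType) (I : Type) (l : seq I) (f : T -> I -> R) :
  (forall u, measurable_fun setT (f^~ u)) ->
  measurable_fun setT (fun z => \big[Num.max/0]_(u <- l) f z u).
Proof.
move=> mf; elim: l => [|a l IH].
  by rewrite (_ : (fun z => _) = cst 0) //; apply: funext => z; rewrite big_nil.
rewrite (_ : (fun z => _) = (f^~ a) \max (fun z => \big[Num.max/0]_(u <- l) f z u)).
  exact: measurable_maxr.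
by apply: funext => z; rewrite big_cons.
Qed.

End measurable_seq.

Section measurable_selected.
Context d (T : measurableType d) (R : realType) (K : nat) (beta : R) (jm : nat).
Variables (H : R -> R) (V : T -> 'I_K -> R).
Hypotheses (mH : measurable_fun setT H) (mV : forall u, measurable_fun setT (V^~ u)).
Local Notation hE := (fun (_ : 'I_K) (y : R) => (H y)%:E).

Lemma measurable_wmax ks j : measurable_fun setT (fun z => wmax (V z) ks j).
Proof. exact: measurable_bigmaxr. Qed.

Lemma measurable_stop_rule ks j :
  measurable_fun setT (fun z => stop_rule beta jm (V z) hE ks j).
Proof.
rewrite /stop_rule; case: (ohead (drop j ks)) => [u|]; last exact: measurable_cst.
apply: measurable_or => //.
rewrite (_ : (fun z => _) = fun z => (1 - j.+1%:R * beta) * H (wmax (V z) ks j) <=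
    (1 - j%:R * beta) * wmax (V z) ks j); last by apply: funext => z; rewrite -EFinM lee_fin.
apply: measurable_fun_ler; apply: measurable_funM => //.
- exact: measurableT_comp (measurable_wmax _ _).
- exact: measurable_wmax.
Qed.

Lemma measurable_num_probes_eq ks n :
  measurable_fun setT (fun z => num_probes beta jm (V z) hE ks == n).
Proof.
case: n => [|n]; first exact: measurable_cst.
by apply: measurable_find_eq => j; exact: measurable_stop_rule.
Qed.

Lemma measurable_selected_eq ks k :
  measurable_fun setT (fun z => selected beta jm (V z) hE ks == Some k).
Proof.
rewrite (_ : (fun z => _) = fun z => has (fun n => (num_probes beta jm (V z) hE ks == n) &&
    (ohead [seq u <- take n ks | V z u == wmax (V z) ks n] == Some k)) (iota 1 jm.+1)).
  apply: measurable_has => n; apply: measurable_and; first exact: measurable_num_probes_eq.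
  apply: measurable_ohead_filter_eq => u.
  by apply: measurable_fun_eqr => //; exact: measurable_wmax.
apply: funext => z; rewrite /selected; set J := num_probes _ _ _ _ _.
apply/idP/hasP => [sel|[n _ /andP[/eqP <- //]]].
exists J; last by rewrite eqxx.
rewrite mem_iota /J /num_probes !ltnS /=.
by have := find_size (stop_rule beta jm (V z) hE ks) (iota 1 jm); rewrite size_iota.
Qed.

End measurable_selected.

(* An alias, so that the point needed by [g_sigma_algebraType] is not declared
   on every permutation type. *)
Definition ordering (K : nat) := {perm 'I_K}.
HB.instance Definition _ K := Choice.on (ordering K).
HB.instance Definition _ K := isPointed.Build (ordering K) 1%g.

Definition config (R : realType) (K : nat) := (ordering K * ('I_K -> R))%type.
HB.instance Definition _ (R : realType) K := Choice.on (config R K).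
HB.instance Definition _ (R : realType) K := isPointed.Build (config R K) (1%g, fun=> 0).

Definition box (R : realType) K (S : set (ordering K)) (A : 'I_K -> set R) : set (config R K) :=
  [set z | S z.1 /\ forall i, A i (z.2 i)].

(* The empty set is added to make the family closed under intersection: boxes
   over two distinct orderings are disjoint. *)
Definition boxes (R : realType) K : set (set (config R K)) :=
  [set E | E = set0 \/ exists S A, (S = setT \/ exists s, S = [set s]) /\
     (forall i, measurable (A i)) /\ E = box S A].
Arguments boxes : clear implicits.

Definition config_space (R : realType) K := g_sigma_algebraType (boxes R K).

Section config_space.
Variables (R : realType) (K : nat).
Local Notation T := (config_space R K).

Lemma boxes_setI_closed : setI_closed (boxes R K).
Proof.
move=> E1 E2 [->|[S1 [A1 [hS1 [mA1 ->]]]]]; first by left; rewrite set0I.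
case=> [->|[S2 [A2 [hS2 [mA2 ->]]]]]; first by left; rewrite setI0.
have -> : box S1 A1 `&` box S2 A2 = box (S1 `&` S2) (fun i => A1 i `&` A2 i).
  apply/seteqP; split => z /=; first by move=> [[? ?] [? ?]]; split => // i; split.
  by move=> [[? ?] A12]; split; split => // i; case: (A12 i).
have mA i : measurable (A1 i `&` A2 i) by exact: measurableI.
have boxW S : (S = setT \/ exists s, S = [set s]) -> boxes R K (box S (fun i => A1 i `&` A2 i)).
  by move=> hS; right; exists S, (fun i => A1 i `&` A2 i).
case: hS1 => [->|[s1 ->]]; first by rewrite setTI; exact: boxW.
case: hS2 => [->|[s2 ->]]; first by rewrite setIT; apply: boxW; right; exists s1.
have [<-|ne] := eqVneq s1 s2; first by rewrite setIid; apply: boxW; right; exists s1.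
left; apply/seteqP; split => z //= [[z1 z2] _].
by move/eqP: ne; rewrite -z1 -z2.
Qed.

Lemma boxes_setT : boxes R K setT.
Proof.
right; exists setT, (fun=> setT); split; first by left.
by split => //; apply/seteqP; split.
Qed.

Lemma measurable_config_value u : measurable_fun setT (fun z : T => z.2 u).
Proof.
move=> _ A mA; rewrite setTI; apply: sub_sigma_algebra; right.
exists setT, (fun i => if i == u then A else setT); split; first by left.
split; first by move=> i; case: ifP.
apply/seteqP; split => z /=; first by move=> Az; split => // i; case: eqP => [->|].
by move=> [_ /(_ u)]; rewrite eqxx.
Qed.

Lemma measurable_config_ordering_eq s : measurable_fun setT (fun z : T => z.1 == s).
Proof.
apply: (measurable_fun_bool true); rewrite setTI; apply: sub_sigma_algebra; right.
exists [set s], (fun=> setT); split; first by right; exists s.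
split => //; apply/seteqP; split => z /=; first by move/eqP.
by move=> [/eqP].
Qed.

End config_space.

Section config_of.
Context d (Om : measurableType d) (R : realType) (K : nat).

Definition config_of (sigma : Om -> {perm 'I_K}) (Y : 'I_K -> Om -> R) (w : Om) :
  config_space R K := (sigma w, fun i => Y i w).

Lemma preimage_config_of_box sigma Y S A :
  config_of sigma Y @^-1` box S A =
  sigma @^-1` S `&` \bigcap_(i in [set: 'I_K]) (Y i @^-1` A i).
Proof.
by apply/seteqP; split => w /= [Sw Aw]; split => // i; [move=> _|]; exact: Aw.
Qed.

Lemma measurable_config_of sigma Y :
  (forall s, measurable (sigma @^-1` [set s])) -> (forall i, measurable_fun setT (Y i)) ->
  measurable_fun setT (config_of sigma Y).
Proof.
move=> msig mY; apply: (@measurability _ _ Om (config_space R K) _ _ (boxes R K)) => //.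
move=> _ [E [->|[S [A [hS [mA ->]]]]] <-]; rewrite setTI; first exact: measurable0.
rewrite preimage_config_of_box; apply: measurableI.
  by case: hS => [->|[s ->]]; [exact: measurableT|exact: msig].
apply: fin_bigcap_measurable; first exact: finite_finset.
by move=> i _; rewrite -(setTI (_ @^-1` _)); exact: mY.
Qed.

End config_of.

Section config_select.
Variables (R : realType) (K : nat) (beta : R) (H : R -> R).

Definition config_select (z : config R K) : option 'I_K :=
  selected beta (Jmax K beta) z.2 (fun _ y => (H y)%:E) (probe_order z.1).

Definition relabel (p : {perm 'I_K}) (z : config R K) : config R K :=
  (((z.1 : {perm 'I_K}) * p^-1)%g, fun i => z.2 (p i)).

Lemma probe_order_mulg (s q : {perm 'I_K}) : probe_order (s * q)%g = map q (probe_order s).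
Proof. by rewrite /probe_order -map_comp; apply: eq_map => i; rewrite permM. Qed.

Lemma config_select_relabel p z :
  config_select (relabel p z) = omap (p^-1)%g (config_select z).
Proof. by rewrite /config_select probe_order_mulg; apply: selected_map => u //=; rewrite permKV. Qed.

Lemma preimage_relabel_select p k :
  relabel p @^-1` [set z | config_select z = Some k] = [set z | config_select z = Some (p k)].
Proof.
apply/seteqP; split => z /=; rewrite config_select_relabel; case: (config_select z) => //= j.
  by move=> [<-]; rewrite permKV.
by move=> [->]; rewrite permK.
Qed.

Lemma measurable_config_select k : measurable_fun setT H ->
  measurable [set z : config_space R K | config_select z = Some k].
Proof.
move=> mH; rewrite (_ : [set z | _] = [set z : config_space R K | has (fun s => (z.1 == s) &&
    (selected beta (Jmax K beta) z.2 (fun _ y => (H y)%:E) (probe_order s) == Some k))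
    (enum {perm 'I_K})]).
  rewrite -[X in measurable X]setTI; apply: (_ : measurable_fun setT _) => //.
    apply: measurable_has => s; apply: measurable_and.
      exact: measurable_config_ordering_eq.
    exact: (measurable_selected_eq beta (Jmax K beta) mH (@measurable_config_value R K)).
apply/seteqP; split => z /=.
  by move=> sel; apply/hasP; exists (z.1 : {perm 'I_K}); rewrite ?mem_enum // eqxx; apply/eqP.
by move=> /hasP[s _ /andP[/eqP z1 /eqP]]; rewrite /config_select z1.
Qed.

End config_select.

Section config_law.
Context d (Om : measurableType d) (R : realType) (P : probability Om R) (K : nat).

Lemma config_law_eq (Z Z' : Om -> config_space R K) :
  measurable_fun setT Z -> measurable_fun setT Z' ->
  (forall E, boxes R K E -> P (Z @^-1` E) = P (Z' @^-1` E)) ->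
  forall A, measurable A -> P (Z @^-1` A) = P (Z' @^-1` A).
Proof.
move=> mZ mZ' eqZ A mA.
pose mZf : {mfun Om >-> config_space R K} := HB.pack Z (isMeasurableFun.Build _ _ _ _ Z mZ).
pose mZf' : {mfun Om >-> config_space R K} := HB.pack Z' (isMeasurableFun.Build _ _ _ _ Z' mZ').
have cover : \bigcup_(n : nat) [set: config_space R K] = setT.
  by apply/seteqP; split => // z _; exists 0%N.
have fin (n : nat) : (distribution P mZf setT < +oo)%E.
  by apply: (le_lt_trans (probability_le1 _ measurableT)); exact: ltry.
have := @measure_unique _ R (config_space R K) (boxes R K) (fun=> setT) erefl
  (@boxes_setI_closed R K) (fun=> boxes_setT R K) cover
  (distribution P mZf) (distribution P mZf') eqZ fin A mA.
by [].
Qed.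

Lemma mutually_independent_relabel (Y : 'I_K -> Om -> R) sigma (p : {perm 'I_K}) :
  mutually_independent P Y sigma ->
  mutually_independent P (fun i => Y (p i)) (fun w => sigma w * p^-1)%g.
Proof.
move=> indep A S mA.
have -> : (fun w => sigma w * p^-1)%g @^-1` S = sigma @^-1` [set s | S (s * p^-1)%g] by [].
have -> : \bigcap_(i in [set: 'I_K]) (Y (p i) @^-1` A i) =
    \bigcap_(j in [set: 'I_K]) (Y j @^-1` A (p^-1 j)%g).
  apply/seteqP; split => w /= Aw j _; first by have := Aw (p^-1 j)%g I; rewrite permKV.
  by have := Aw (p j) I; rewrite permK.
rewrite indep; last by move=> j; exact: mA.
congr (_ * _)%E; rewrite [LHS](reindex_inj (@perm_inj _ p)) /=.
by apply: eq_bigr => i _; rewrite permK.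
Qed.

Variables (Y : 'I_K -> Om -> R) (sigma : Om -> {perm 'I_K}).
Hypotheses (mY : forall i, measurable_fun setT (Y i))
  (msig : forall s, measurable (sigma @^-1` [set s]))
  (idY : identically_distributed P Y) (indep : mutually_independent P Y sigma)
  (sigma_unif : forall s s', P (sigma @^-1` [set s]) = P (sigma @^-1` [set s'])).

Lemma config_law_relabel p (A : set (config_space R K)) : measurable A ->
  P (config_of sigma Y @^-1` (relabel p @^-1` A)) = P (config_of sigma Y @^-1` A).
Proof.
move=> mA; have sigma'E s :
    (fun w => sigma w * p^-1)%g @^-1` [set s] = sigma @^-1` [set (s * p)%g].
  by apply/seteqP; split => w /= sw; [rewrite -sw mulgKV|rewrite sw mulgK].
apply: esym; apply: (config_law_eq
  (Z' := config_of (fun w => sigma w * p^-1)%g (fun i => Y (p i)))) => //.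
- exact: measurable_config_of.
- by apply: measurable_config_of => // s; rewrite sigma'E.
move=> _ [->|[S [B [hS [mB ->]]]]]; first by rewrite !preimage_set0.
rewrite !preimage_config_of_box indep // (mutually_independent_relabel p indep) //.
congr (_ * _)%E; last by apply: eq_bigr => i _; exact: idY.
by case: hS => [->|[s ->]]; rewrite ?preimage_setT // sigma'E; exact: sigma_unif.
Qed.

End config_law.

Section comp.
Context d (Om : measurableType d) (R : realType) (P : probability Om R) (K : nat).
Variables (X : 'I_K -> Om -> R) (f : R -> R).
Hypothesis mf : measurable_fun setT f.

Lemma identically_distributed_comp :
  identically_distributed P X -> identically_distributed P (fun i => f \o X i).
Proof.
move=> idX i j A mA; apply: (idX i j (f @^-1` A)).
by rewrite -[X in measurable X]setTI; exact: mf.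
Qed.

Lemma mutually_independent_comp sigma :
  mutually_independent P X sigma -> mutually_independent P (fun i => f \o X i) sigma.
Proof.
move=> indep A S mA; apply: (indep (fun i => f @^-1` A i)) => i.
by rewrite -[X in measurable X]setTI; exact: mf.
Qed.

End comp.

Lemma identically_distributed_expectation d (Om : measurableType d) (R : realType)
    (P : probability Om R) K (X : 'I_K -> Om -> R) (f : R -> R) :
  (forall i, measurable_fun setT (X i)) -> identically_distributed P X ->
  measurable_fun setT f -> (forall t, 0 <= f t) ->
  forall i j, ('E_P[f \o X i] = 'E_P[f \o X j])%E.
Proof.
move=> mX idX mf f0 i j; rewrite !unlock.
pose Xrv k : {RV P >-> R} := HB.pack (X k) (isMeasurableFun.Build _ _ _ _ (X k) (mX k)).
have mEf : measurable_fun setT (EFin \o f) by exact/measurable_EFinP.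
have Xdistr k : (\int[P]_w ((f \o X k) w)%:E =
    \int[distribution P (Xrv k)]_t (f t)%:E)%E.
  by rewrite ge0_integral_distribution // => t; rewrite lee_fin.
rewrite !Xdistr; apply: eq_measure_integral => A mA _.
exact: idX.
Qed.

Lemma expectation_max_identically_distributed d (Om : measurableType d) (R : realType)
    (P : probability Om R) K (Y : 'I_K -> Om -> R) :
  (forall i, measurable_fun setT (Y i)) -> (forall i w, 0 <= Y i w) ->
  identically_distributed P Y ->
  forall y i j, ('E_P[fun w => Num.max y (Y i w)] = 'E_P[fun w => Num.max y (Y j w)])%E.
Proof.
move=> mY Y0 idY y i j.
(* Clipping at 0 makes the integrand nonnegative on all of R, as needed to
   transfer the expectation to the common distribution. *)
have maxY0 k : (fun w => Num.max y (Y k w)) = (fun t => Num.max y (Num.max t 0)) \o Y k.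
  by apply: funext => w /=; rewrite (max_l (Y0 k w)).
rewrite !maxY0; apply: identically_distributed_expectation => //.
- by apply: measurable_maxr => //; exact: measurable_maxr.
- by move=> t; rewrite le_max le_max lexx !orbT.
Qed.

Lemma ge0_expectationZr d (Om : measurableType d) (R : realType) (P : probability Om R)
    (X : Om -> R) (c : R) :
  measurable_fun setT X -> (forall w, 0 <= X w) -> 0 <= c ->
  ('E_P[fun w => X w * c]%R = c%:E * 'E_P[X])%E.
Proof.
move=> mX X0 c0; rewrite !unlock -ge0_integralZl //.
- by apply: eq_integral => w _; rewrite -EFinM mulrC.
- exact/measurable_EFinP.
- by move=> w _; rewrite lee_fin.
Qed.

Section expectation_max.
Context d (Om : measurableType d) (R : realType) (P : probability Om R) (Y : Om -> R).
Hypotheses (mY : measurable_fun setT Y) (Y0 : forall w, 0 <= Y w)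
  (EY : ('E_P[Y] < +oo)%E).

Let measurable_max y : measurable_fun setT (fun w => Num.max y (Y w)).
Proof. exact: measurable_maxr. Qed.

Let max_ge0 y w : 0 <= Num.max y (Y w).
Proof. by rewrite le_max Y0 orbT. Qed.

Lemma expectation_max_le x y : x <= y ->
  ('E_P[fun w => Num.max x (Y w)] <= 'E_P[fun w => Num.max y (Y w)])%E.
Proof.
move=> xy; apply: expectation_le => //; apply: aeW => w.
by rewrite ge_max le_max xy le_max lexx orbT.
Qed.

Lemma expectation_max_fin_num y : ('E_P[fun w => Num.max y (Y w)])%E \is a fin_num.
Proof.
rewrite ge0_fin_numE ?expectation_ge0 //.
apply: (le_lt_trans (expectation_max_le (ler_norm y))).
rewrite unlock (@le_lt_trans _ _ (\int[P]_w ((`|y|)%:E + (Y w)%:E))%E) //.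
  apply: ge0_le_integral => //.
  - by move=> w _; rewrite lee_fin.
  - by apply/measurable_EFinP; exact: measurable_max.
  - by apply: emeasurable_funD => //; exact/measurable_EFinP.
  - by move=> w _; rewrite -EFinD lee_fin ge_max lerDl Y0 lerDr normr_ge0.
rewrite ge0_integralD //; try by [move=> w _; rewrite lee_fin | exact/measurable_EFinP].
rewrite integral_cst // [X in (_ * X)%E](_ : _ = 1%E) ?mule1; last exact: probability_setT.
by move: EY; rewrite unlock; apply: lte_add_pinfty; exact: ltry.
Qed.

Lemma measurable_fine_expectation_max :
  measurable_fun setT (fun y : R => fine ('E_P[fun w => Num.max y (Y w)])%E).
Proof.
apply: nondecreasing_measurable => // x y xy.
by rewrite fine_le ?expectation_max_fin_num ?expectation_max_le.
Qed.

End expectation_max.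

Lemma equiprobable_partition d (Om : measurableType d) (R : realType)
    (P : probability Om R) K (E : 'I_K -> set Om) :
  (forall i, measurable (E i)) -> trivIset setT E ->
  \big[setU/set0]_(i < K) E i = setT -> (forall i j, P (E i) = P (E j)) ->
  forall k, P (E k) = ((K%:R)^-1)%:E.
Proof.
move=> mE tE cover eqE k; have K0 : (0 < K)%N by apply: leq_ltn_trans (ltn_ord k).
have := probability_setT P; rewrite -cover measure_bigsetU_ord //.
rewrite (eq_bigr (fun=> P (E k))) => [|i _]; last exact: eqE.
rewrite sumr_const card_ord.
rewrite -(fineK (fin_num_measure P _ (mE k))); set x := fine _ => sumE.
have [xK] : (x *+ K)%:E = 1%E by rewrite EFin_natmul; exact: sumE.
have K0' : K%:R != 0 :> R by rewrite pnatr_eq0 -lt0n.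
by congr EFin; apply: (mulIf K0'); rewrite mulVf // mulr_natr.
Qed.

Section equiprobable_selection.
Context d (Om : measurableType d) (R : realType) (P : probability Om R) (K : nat).
Variables (Y : 'I_K -> Om -> R) (sigma : Om -> {perm 'I_K}) (beta : R) (H : R -> R).
Hypotheses (mY : forall i, measurable_fun setT (Y i)) (Y0 : forall i w, 0 <= Y i w)
  (msig : forall s, measurable (sigma @^-1` [set s]))
  (idY : identically_distributed P Y) (indep : mutually_independent P Y sigma)
  (sigma_unif : forall s s', P (sigma @^-1` [set s]) = P (sigma @^-1` [set s']))
  (mH : measurable_fun setT H).

Lemma config_select_equiprobable k :
  P (config_of sigma Y @^-1` [set z | config_select beta H z = Some k]) = ((K%:R)^-1)%:E.
Proof.
have K0 : (0 < K)%N by apply: leq_ltn_trans (ltn_ord k).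
apply: (equiprobable_partition
  (E := fun i => config_of sigma Y @^-1` [set z | config_select beta H z = Some i]))
  => [i|i j _ _ [w [/= -> []]]//||i j].
- rewrite -[X in measurable X]setTI; apply: measurable_config_of => //.
  exact: measurable_config_select.
- apply/seteqP; split => // w _.
  have : config_select beta H (config_of sigma Y w) != None.
    apply: selected_neq_None => [u|]; first exact: Y0.
    by rewrite -size_eq0 size_map size_enum_ord -lt0n.
  case sel: config_select => [i|] // _.
  by rewrite (bigD1 i) //=; left.
- rewrite /= -[in LHS](tpermR i j) -preimage_relabel_select.
  by apply: config_law_relabel => //; exact: measurable_config_select.
Qed.

End equiprobable_selection.

Section steady_state.
Context d (Om : measurableType d) (R : realType) (P : probability Om R) (K : nat).
Variables (X : 'I_K -> Om -> R) (r : 'I_K -> R) (kappa : R).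
Hypotheses (r0 : forall k, 0 < r k) (kappa0 : 0 < kappa).

Lemma order_ok_steady s : order_ok r (fun k => kappa * r k) s.
Proof.
have ratio u : r u / (kappa * r u) = kappa^-1.
  by field; apply/andP; split; exact: lt0r_neq0.
by move=> i j _; rewrite !ratio.
Qed.

Lemma jps_select_steady (beta : R) (H : R -> R) (s : {perm 'I_K}) (w : Om) :
  (forall u (y : R), ('E_P[fun w' => Num.max y (X u w' / kappa)%R])%E = (H y)%:E) ->
  jps_select P X r (fun k => kappa * r k) beta s w =
  config_select beta H (s, fun i => X i w / kappa).
Proof.
move=> EH; rewrite /jps_select /config_select /=.
have ratio u t : r u * t / (kappa * r u) = t / kappa.
  by field; apply/andP; split; exact: lt0r_neq0.
congr selected; first by apply: funext => u; rewrite ratio.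
apply: funext => u; apply: funext => y; rewrite -(EH u y); congr expectation.
by apply: funext => w'; rewrite ratio.
Qed.

End steady_state.

Theorem corollary1 (R : realType) (d : measure_display) (Om : measurableType d)
  (P : probability Om R) (K : nat) (X : 'I_K -> Om -> R)
  (sigma : Om -> {perm 'I_K}) (r : 'I_K -> R) (beta kappa : R) :
  (* (A1) *)
  (forall k, measurable_fun setT (X k)) ->
  (forall k w, 0 <= X k w) ->
  (forall k, 'E_P[X k]%E = 1%:E) ->
  identically_distributed P X ->
  (forall s, measurable (sigma @^-1` [set s])) ->
  mutually_independent P X sigma ->
  (forall k, 0 < r k) ->
  0 < beta <= 1 ->
  (* steady state T(n-1) = T^* with T^*_k = kappa r_k *)
  0 < kappa ->
  (* the probing order is uniform among the orderings by decreasing r_k/T_k *)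
  (forall s, P (sigma @^-1` [set s]) =
     if `[< order_ok r (fun k => kappa * r k) s >] then
       ((#|[set s' : {perm 'I_K} | `[< order_ok r (fun k => kappa * r k) s' >]]|)%:R^-1)%:E
     else 0%E) ->
  forall k : 'I_K,
    P [set w | jps_select P X r (fun k => kappa * r k) beta (sigma w) w = Some k]
    = ((K%:R)^-1)%:E.
Proof.
move=> mX X0 EX idX msig indep r0 _ kappa0 unif k.
have mscale : measurable_fun setT (fun t : R => t / kappa) by exact: measurable_funM.
pose Y i := (fun t => t / kappa) \o X i.
have mY i : measurable_fun setT (Y i) by exact: measurableT_comp.
have Y0 i w : 0 <= Y i w by rewrite divr_ge0 // ltW.
have EY : ('E_P[Y k] < +oo)%E.
  by rewrite ge0_expectationZr ?invr_ge0 ?(ltW kappa0) // EX mule1 ltry.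
pose H y := fine ('E_P[fun w => Num.max y (Y k w)])%E.
have EH u y : ('E_P[fun w => Num.max y (X u w / kappa)%R])%E = (H y)%:E.
  rewrite fineK ?expectation_max_fin_num //.
  exact: (expectation_max_identically_distributed mY Y0 (identically_distributed_comp mscale idX)).
rewrite [X in P X](_ : _ = config_of sigma Y @^-1` [set z | config_select beta H z = Some k]).
  apply: config_select_equiprobable => //.
  - exact: identically_distributed_comp.
  - exact: mutually_independent_comp.
  - by move=> s s'; rewrite !unif !asboolT //; exact: order_ok_steady.
  - exact: measurable_fine_expectation_max.
by apply/seteqP; split => w /=; rewrite (jps_select_steady r0 kappa0 _ _ _ EH).
Qed.
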